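(* Under the standing assumptions below, let $\{\pi_k\}$ be the sequence generated by the trust-region method described in the context, and assume $\mathbb A^*_{\pi_k}>0$ for all $k$ (so that every ratio $r_k$ is well defined). Then (1) $\liminf_{k\to\infty}\mathbb A^*_{\pi_k}=0$; (2) $\lim_{k\to\infty}\eta(\pi_k)=\eta(\pi^* )$, where $\pi^*$ is an optimal solution of $\max_{\pi\in\Pi}\eta(\pi)$.
   Context: Consider an infinite-horizon discounted Markov decision process $(\mathcal S,\mathcal A,P,r,\rho_0,\gamma)$ with finite state space $\mathcal S$, finite action space $\mathcal A$, transition probabilities $P(s'|s,a)$, bounded reward function $r:\mathcal S\times\mathcal A\to\mathbb R$, initial-state distribution $\rho_0$ with $\rho_0(s)>0$ for all $s\in\mathcal S$, and discount factor $\gamma\in(0,1)$. A policy $\pi$ assigns to each state $s$ a probability distribution $\pi(\cdot|s)$ on $\mathcal A$; $\Pi$ denotes the set of all policies. The total expected reward is $\eta(\pi)=\mathbb E_\pi[\sum_{t=0}^\infty\gamma^t r(s_t,a_t)]$, where $s_0\sim\rho_0$, $a_t\sim\pi(\cdot|s_t)$, $s_{t+1}\sim P(\cdot|s_t,a_t)$. The unnormalized discounted visitation frequency is $\rho_\pi(s)=\sum_{t=0}^\infty\gamma^t\mathbb P(s_t=s\mid\pi)$. $Q_\pi(s,a)=\mathbb E_\pi[\sum_{l\ge0}\gamma^l r(s_l,a_l)\mid s_0=s,a_0=a]$, $V_\pi(s)=\mathbb E_\pi[\sum_{l\ge0}\gamma^l r(s_l,a_l)\mid s_0=s]$, and the advantage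 is $A_\pi(s,a)=Q_\pi(s,a)-V_\pi(s)$. The surrogate function is $L_\pi(\tilde\pi)=\eta(\pi)+\sum_s\rho_\pi(s)\sum_a\tilde\pi(a|s)A_\pi(s,a)$. The policy advantage of $\pi'$ with respect to $\pi$ is $\mathbb A_\pi(\pi')=\sum_s\rho_\pi(s)\sum_a\pi'(a|s)A_\pi(s,a)$, and $\mathbb A^*_\pi=\max_{\pi'\in\Pi}\mathbb A_\pi(\pi')$. The total variation distance is $D_{TV}(p\|q)=\frac12\sum_x|p(x)-q(x)|$. Trust-region method: fix constants $0<\beta_0<\beta_1<1$ and $0<\gamma_3<\gamma_2\le1<\gamma_1$, an initial policy $\pi_0$ and radius $\delta_0>0$. At iteration $k$, let $\tilde\pi_{k+1}$ be an optimal solution of $\max_{\pi\in\Pi}L_{\pi_k}(\pi)$ subject to $\sum_s\rho_{\pi_k}(s)D_{TV}(\pi_k(\cdot|s)\|\pi(\cdot|s))\le\delta_k$; compute $r_k=\frac{\eta(\tilde\pi_{k+1})-\eta(\pi_k)}{L_{\pi_k}(\tilde\pi_{k+1})-L_{\pi_k}(\pi_k)}$; set $\pi_{k+1}=\tilde\pi_{k+1}$ if $r_k\ge\beta_0$ and $\pi_{k+1}=\pi_k$ otherwise; set $\delta_{k+1}=\gamma_1\delta_k$ if $r_k\ge\beta_1$, $\delta_{k+1}=\gamma_2\delta_k$ if $r_k\in[\beta_0,\beta_1)$, and $\delta_{k+1}=\gamma_3\delta_k$ otherwise. *)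

From Stdlib Require Import Reals Lra ClassicalEpsilon.
Open Scope R_scope.

(* A finite MDP: states are 0..nS-1, actions are 0..nA-1.
   mP s a s' = P(s'|s,a); mr s a = r(s,a); mrho0 s = rho_0(s); mgamma = gamma. *)
Record MDP := mkMDP {
  nS : nat; nA : nat;
  mP : nat -> nat -> nat -> R;
  mr : nat -> nat -> R;
  mrho0 : nat -> R;
  mgamma : R }.

Fixpoint fsum (n : nat) (f : nat -> R) : R :=
  match n with O => 0 | S n' => fsum n' f + f n' end.

Definition mdp_wf (M : MDP) : Prop :=
  0 < mgamma M < 1 /\
  (forall s, (s < nS M)%nat -> 0 < mrho0 M s) /\
  fsum (nS M) (mrho0 M) = 1 /\
  (forall s a, (s < nS M)%nat -> (a < nA M)%nat ->
     (forall s', (s' < nS M)%nat -> 0 <= mP M s a s') /\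
     fsum (nS M) (mP M s a) = 1).

(* A (stochastic, stationary) policy: pi s a = pi(a|s). *)
Definition policy := nat -> nat -> R.

Definition is_policy (M : MDP) (pi : policy) : Prop :=
  forall s, (s < nS M)%nat ->
    (forall a, (a < nA M)%nat -> 0 <= pi s a) /\ fsum (nA M) (pi s) = 1.

Definition Lim (u : nat -> R) : R :=
  epsilon (inhabits 0) (fun l => Un_cv u l).

Definition series_sum (u : nat -> R) : R := Lim (fun n => sum_f_R0 u n).

Definition kron (i j : nat) : R := if Nat.eqb i j then 1 else 0.

(* sa_dist M pi mu t s a = P(s_t = s, a_t = a) when (s_0,a_0) ~ mu and
   a_t ~ pi(.|s_t), s_{t+1} ~ P(.|s_t,a_t) for t >= 1. *)
Fixpoint sa_dist (M : MDP) (pi : policy) (mu : nat -> nat -> R) (t : nat)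
  : nat -> nat -> R :=
  match t with
  | O => mu
  | S t' => fun s' a' =>
      pi s' a' * fsum (nS M) (fun s => fsum (nA M) (fun a =>
                   sa_dist M pi mu t' s a * mP M s a s'))
  end.

Definition ret (M : MDP) (pi : policy) (mu : nat -> nat -> R) : R :=
  series_sum (fun t => mgamma M ^ t *
    fsum (nS M) (fun s => fsum (nA M) (fun a => sa_dist M pi mu t s a * mr M s a))).

Definition init_sa (M : MDP) (pi : policy) : nat -> nat -> R :=
  fun s a => mrho0 M s * pi s a.

Definition eta (M : MDP) (pi : policy) : R := ret M pi (init_sa M pi).

Definition state_prob (M : MDP) (pi : policy) (t s : nat) : R :=
  fsum (nA M) (fun a => sa_dist M pi (init_sa M pi) t s a).

Definition rho_vis (M : MDP) (pi : policy) (s : nat) : R :=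
  series_sum (fun t => mgamma M ^ t * state_prob M pi t s).

Definition Vf (M : MDP) (pi : policy) (s : nat) : R :=
  ret M pi (fun s' a => kron s' s * pi s a).

Definition Qf (M : MDP) (pi : policy) (s a : nat) : R :=
  ret M pi (fun s' a' => kron s' s * kron a' a).

Definition Adv (M : MDP) (pi : policy) (s a : nat) : R := Qf M pi s a - Vf M pi s.

Definition PolAdv (M : MDP) (pi pi' : policy) : R :=
  fsum (nS M) (fun s => rho_vis M pi s *
    fsum (nA M) (fun a => pi' s a * Adv M pi s a)).

Definition Lsur (M : MDP) (pi pi' : policy) : R := eta M pi + PolAdv M pi pi'.

Definition Astar (M : MDP) (pi : policy) : R :=
  epsilon (inhabits 0) (fun v =>
    (exists pi', is_policy M pi' /\ PolAdv M pi pi' = v) /\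
    (forall pi', is_policy M pi' -> PolAdv M pi pi' <= v)).

Definition dTV (M : MDP) (p q : nat -> R) : R :=
  / 2 * fsum (nA M) (fun a => Rabs (p a - q a)).

Definition avgTV (M : MDP) (pik pi : policy) : R :=
  fsum (nS M) (fun s => rho_vis M pik s * dTV M (pik s) (pi s)).

Definition subproblem_solution (M : MDP) (pik : policy) (d : R) (pi : policy) : Prop :=
  is_policy M pi /\ avgTV M pik pi <= d /\
  (forall pi', is_policy M pi' -> avgTV M pik pi' <= d -> Lsur M pik pi' <= Lsur M pik pi).

Definition ratio (M : MDP) (pik pit : policy) : R :=
  (eta M pit - eta M pik) / (Lsur M pik pit - Lsur M pik pik).

(* pik k = pi_k, pit k = tilde pi_{k+1}, delta k = delta_k *)
Definition trust_region_run (M : MDP) (b0 b1 g1 g2 g3 d0 : R) (pi0 : policy)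
  (pik pit : nat -> policy) (delta : nat -> R) : Prop :=
  pik O = pi0 /\ delta O = d0 /\
  forall k,
    subproblem_solution M (pik k) (delta k) (pit k) /\
    let rk := ratio M (pik k) (pit k) in
    (b0 <= rk -> pik (S k) = pit k) /\
    (rk < b0 -> pik (S k) = pik k) /\
    (b1 <= rk -> delta (S k) = g1 * delta k) /\
    (b0 <= rk < b1 -> delta (S k) = g2 * delta k) /\
    (rk < b0 -> delta (S k) = g3 * delta k).

Definition liminf_is (u : nat -> R) (l : R) : Prop :=
  forall eps, 0 < eps ->
    (exists N, forall k, (N <= k)%nat -> l - eps < u k) /\
    (forall N, exists k, (N <= k)%nat /\ u k < l + eps).

Definition optimal_policy (M : MDP) (pi : policy) : Prop :=
  is_policy M pi /\ forall pi', is_policy M pi' -> eta M pi' <= eta M pi.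

(* The performance difference identity
     eta p - eta pi = sum_s rho_p(s) sum_a p(a|s) Adv_pi(s,a)
   gives two estimates.  Since rho0 <= rho_vis <= 1/(1-g), the optimality gap
   eta pi* - eta pi is at most A*_pi / ((1-g) min rho0); and since both rho_p - rho_pi
   and sum_a p(a|s) Adv_pi(s,a) are O(avgTV pi p), the surrogate error
   |eta p - L_pi p| is O(avgTV pi p ^ 2).  Mixing pi_k with its greedy policy shows that
   the predicted gain is at least min(1, delta_k (1-g)) A*_{pi_k}.  If A* stayed above
   some eps > 0, sufficiently small radii would always give r_k >= b1, so the radius
   would stay bounded below and every accepted step would raise eta by a fixed amount;
   since rejections shrink the radius, steps are accepted infinitely often, contradicting
   the boundedness of eta.  So liminf A* = 0, and the gap estimate together with the
   monotonicity of eta along the run gives convergence to the optimal value. *)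

From Stdlib Require Import Reals Lra Lia ClassicalEpsilon Classical.
Open Scope R_scope.

Lemma fsum_ext n f g : (forall i, (i < n)%nat -> f i = g i) -> fsum n f = fsum n g.
Proof.
  induction n as [|n IH]; intros H; simpl; auto.
  rewrite IH, H; [reflexivity | lia | intros; apply H; lia].
Qed.

Lemma fsum_plus n f g : fsum n (fun i => f i + g i) = fsum n f + fsum n g.
Proof. induction n; simpl; [lra | rewrite IHn; lra]. Qed.

Lemma fsum_minus n f g : fsum n (fun i => f i - g i) = fsum n f - fsum n g.
Proof. induction n; simpl; [lra | rewrite IHn; lra]. Qed.

Lemma fsum_scal_l n c f : fsum n (fun i => c * f i) = c * fsum n f.
Proof. induction n; simpl; [lra | rewrite IHn; lra]. Qed.

Lemma fsum_scal_r n c f : fsum n (fun i => f i * c) = fsum n f * c.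
Proof. induction n; simpl; [lra | rewrite IHn; lra]. Qed.

Lemma fsum_0 n : fsum n (fun _ => 0) = 0.
Proof. induction n; simpl; [lra | rewrite IHn; lra]. Qed.

Lemma fsum_le n f g : (forall i, (i < n)%nat -> f i <= g i) -> fsum n f <= fsum n g.
Proof.
  induction n as [|n IH]; intros H; simpl; [lra|].
  apply Rplus_le_compat; [apply IH; intros; apply H |apply H]; lia.
Qed.

Lemma fsum_nonneg n f : (forall i, (i < n)%nat -> 0 <= f i) -> 0 <= fsum n f.
Proof. intros H. rewrite <- (fsum_0 n). apply fsum_le; auto. Qed.

Lemma fsum_Rabs_le n f : Rabs (fsum n f) <= fsum n (fun i => Rabs (f i)).
Proof.
  induction n; simpl; [rewrite Rabs_R0; lra|].
  eapply Rle_trans; [apply Rabs_triang | lra].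
Qed.

Lemma fsum_swap n m (f : nat -> nat -> R) :
  fsum n (fun i => fsum m (fun j => f i j)) = fsum m (fun j => fsum n (fun i => f i j)).
Proof.
  induction n; simpl; [rewrite fsum_0; auto|].
  rewrite IHn, <- fsum_plus; reflexivity.
Qed.

Lemma fsum_swap4 n1 m1 n2 m2 (F : nat -> nat -> nat -> nat -> R) :
  fsum n1 (fun i => fsum m1 (fun j => fsum n2 (fun k => fsum m2 (fun l => F i j k l)))) =
  fsum n2 (fun k => fsum m2 (fun l => fsum n1 (fun i => fsum m1 (fun j => F i j k l)))).
Proof.
  transitivity (fsum n1 (fun i => fsum n2 (fun k => fsum m1 (fun j => fsum m2 (fun l => F i j k l))))).
  { apply fsum_ext; intros; apply fsum_swap. }
  rewrite fsum_swap; apply fsum_ext; intros k _.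
  transitivity (fsum n1 (fun i => fsum m2 (fun l => fsum m1 (fun j => F i j k l)))).
  { apply fsum_ext; intros; apply fsum_swap. }
  apply fsum_swap.
Qed.

Lemma fsum2_scal_l n m c (F : nat -> nat -> R) :
  c * fsum n (fun i => fsum m (fun j => F i j)) = fsum n (fun i => fsum m (fun j => c * F i j)).
Proof. rewrite <- fsum_scal_l. apply fsum_ext; intros. rewrite fsum_scal_l; auto. Qed.

Lemma fsum2_scal_r n m c (F : nat -> nat -> R) :
  fsum n (fun i => fsum m (fun j => F i j)) * c = fsum n (fun i => fsum m (fun j => F i j * c)).
Proof. rewrite <- fsum_scal_r. apply fsum_ext; intros. rewrite fsum_scal_r; auto. Qed.

Lemma fsum_ge_term n f j :
  (forall i, (i < n)%nat -> 0 <= f i) -> (j < n)%nat -> f j <= fsum n f.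
Proof.
  induction n as [|n IH]; intros H Hj; simpl; [lia|].
  assert (0 <= fsum n f) by (apply fsum_nonneg; intros; apply H; lia).
  destruct (Nat.eq_dec j n) as [->|Hjn]; [lra|].
  assert (f j <= fsum n f) by (apply IH; [intros; apply H|]; lia).
  assert (0 <= f n) by (apply H; lia). lra.
Qed.

Lemma kron_refl i : kron i i = 1.
Proof. unfold kron. rewrite Nat.eqb_refl; auto. Qed.

Lemma kron_neq i j : i <> j -> kron i j = 0.
Proof. unfold kron. intros H. apply Nat.eqb_neq in H. rewrite H; auto. Qed.

Lemma kron_sym i j : kron i j = kron j i.
Proof. unfold kron. rewrite Nat.eqb_sym; auto. Qed.

Lemma kron_nonneg i j : 0 <= kron i j.
Proof. unfold kron; destruct (Nat.eqb i j); lra. Qed.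

Lemma fsum_kron_l n j f : (j < n)%nat -> fsum n (fun i => kron i j * f i) = f j.
Proof.
  induction n as [|n IH]; intros Hj; simpl; [lia|].
  destruct (Nat.eq_dec j n) as [->|Hjn].
  - rewrite kron_refl, (fsum_ext _ _ (fun _ => 0)), fsum_0; [lra|].
    intros i Hi. rewrite kron_neq by lia. lra.
  - rewrite IH, kron_neq by lia. lra.
Qed.

Lemma fsum_kron2 n m i0 j0 (F : nat -> nat -> R) : (i0 < n)%nat -> (j0 < m)%nat ->
  fsum n (fun i => fsum m (fun j => kron i i0 * kron j j0 * F i j)) = F i0 j0.
Proof.
  intros Hi Hj. rewrite <- (fsum_kron_l n i0 (fun i => F i j0)) by auto.
  apply fsum_ext; intros i _.
  rewrite <- (fsum_kron_l m j0 (fun j => kron i i0 * F i j)) by auto.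
  apply fsum_ext; intros; ring.
Qed.

Fixpoint argmax (f : nat -> R) (m : nat) : nat :=
  match m with
  | O => O
  | S m' => let j := argmax f m' in if Rle_dec (f m') (f j) then j else m'
  end.

Lemma argmax_spec f m : (0 < m)%nat ->
  (argmax f m < m)%nat /\ forall i, (i < m)%nat -> f i <= f (argmax f m).
Proof.
  induction m as [|[|m'] IH]; intros Hm; [lia| |].
  - simpl. destruct (Rle_dec (f 0%nat) (f 0%nat));
      split; try lia; intros i Hi; replace i with 0%nat by lia; lra.
  - destruct IH as [H1 H2]; [lia|].
    change (argmax f (S (S m'))) with
      (if Rle_dec (f (S m')) (f (argmax f (S m'))) then argmax f (S m') else S m').
    destruct (Rle_dec (f (S m')) (f (argmax f (S m')))) as [Hle|Hgt];
      (split; [lia|]); intros i Hi;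
      destruct (Nat.eq_dec i (S m')) as [->|Hne]; try lra;
      assert (f i <= f (argmax f (S m'))) by (apply H2; lia); lra.
Qed.

Lemma finite_pos_lower_bound n f : (forall i, (i < n)%nat -> 0 < f i) ->
  exists c, 0 < c /\ forall i, (i < n)%nat -> c <= f i.
Proof.
  induction n as [|n IH]; intros H.
  - exists 1; split; [lra | intros; lia].
  - destruct IH as [c [Hc Hcf]]; [intros; apply H; lia|].
    exists (Rmin c (f n)). split; [apply Rmin_pos; auto; apply H; lia|].
    intros i Hi. destruct (Nat.eq_dec i n) as [->|Hne]; [apply Rmin_r|].
    eapply Rle_trans; [apply Rmin_l | apply Hcf; lia].
Qed.

Lemma Rabs_le_inv x c : Rabs x <= c -> - c <= x <= c.
Proof. unfold Rabs; destruct (Rcase_abs x); intros; lra. Qed.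

Definition series_cv (u : nat -> R) (l : R) := Un_cv (fun n => sum_f_R0 u n) l.

Lemma Lim_unique u l : Un_cv u l -> Lim u = l.
Proof.
  intros H. unfold Lim.
  assert (H2 : Un_cv u (epsilon (inhabits 0) (fun l => Un_cv u l))).
  { apply (epsilon_spec (inhabits 0) (fun l => Un_cv u l)). exists l; auto. }
  eapply UL_sequence; eauto.
Qed.

Lemma series_sum_unique u l : series_cv u l -> series_sum u = l.
Proof. apply Lim_unique. Qed.

Lemma series_cv_unique u a b : series_cv u a -> series_cv u b -> a = b.
Proof. apply UL_sequence. Qed.

Lemma series_cv_ext u v l : (forall n, u n = v n) -> series_cv u l -> series_cv v l.
Proof.
  intros He H eps Heps. destruct (H eps Heps) as [N HN]. exists N; intros n Hn.
  rewrite <- (sum_eq u v) by auto. apply HN; auto.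
Qed.

Lemma Un_cv_const c : Un_cv (fun _ => c) c.
Proof. intros eps He. exists O. intros. unfold Rdist. rewrite Rminus_diag, Rabs_R0; auto. Qed.

Lemma series_cv_0 : series_cv (fun _ => 0) 0.
Proof. eapply Un_cv_ext; [|apply (Un_cv_const 0)]. intros n; induction n; simpl; lra. Qed.

Lemma series_cv_plus u v a b :
  series_cv u a -> series_cv v b -> series_cv (fun n => u n + v n) (a + b).
Proof.
  intros Hu Hv. eapply Un_cv_ext; [|apply (CV_plus _ _ _ _ Hu Hv)].
  intros n; simpl. rewrite plus_sum; auto.
Qed.

Lemma series_cv_minus u v a b :
  series_cv u a -> series_cv v b -> series_cv (fun n => u n - v n) (a - b).
Proof.
  intros Hu Hv. eapply Un_cv_ext; [|apply (CV_minus _ _ _ _ Hu Hv)].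
  intros n; simpl. rewrite minus_sum; auto.
Qed.

Lemma series_cv_scal_l u a c : series_cv u a -> series_cv (fun n => c * u n) (c * a).
Proof.
  intros Hu. eapply Un_cv_ext; [|apply (CV_mult (fun _ => c) _ c a (Un_cv_const c) Hu)].
  intros n; simpl. rewrite scal_sum. apply sum_eq; intros; ring.
Qed.

Lemma series_cv_scal_r u a c : series_cv u a -> series_cv (fun n => u n * c) (a * c).
Proof.
  intros H. rewrite Rmult_comm. eapply series_cv_ext; [|apply (series_cv_scal_l _ _ c H)].
  intros; simpl; ring.
Qed.

Lemma series_cv_fsum k (u : nat -> nat -> R) (l : nat -> R) :
  (forall i, (i < k)%nat -> series_cv (u i) (l i)) ->
  series_cv (fun n => fsum k (fun i => u i n)) (fsum k l).
Proof. induction k; intros H; simpl; [apply series_cv_0 | apply series_cv_plus; auto]. Qed.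

Lemma series_cv_le u v a b :
  (forall n, u n <= v n) -> series_cv u a -> series_cv v b -> a <= b.
Proof. intros H. apply Rle_cv_lim. intros n; apply sum_Rle; auto. Qed.

Lemma series_cv_shift u l : series_cv u l -> series_cv (fun n => u (S n)) (l - u O).
Proof.
  intros H eps He. destruct (H eps He) as [N HN]. exists N. intros n Hn.
  specialize (HN (S n) ltac:(lia)). unfold Rdist in *.
  rewrite (decomp_sum u (S n)) in HN by lia. simpl pred in HN.
  replace (sum_f_R0 (fun i => u (S i)) n - (l - u 0%nat)) with
    (u 0%nat + sum_f_R0 (fun i => u (S i)) n - l) by ring. auto.
Qed.

Lemma liminf_is_0_of_frequently_small (u : nat -> R) : (forall k, 0 <= u k) ->
  (forall eps, 0 < eps -> forall N, exists k, (N <= k)%nat /\ u k < eps) -> liminf_is u 0.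
Proof.
  intros Hu Hsmall eps Heps. split.
  - exists O. intros k _. specialize (Hu k). lra.
  - intros N. destruct (Hsmall eps Heps N) as [k [Hk Hlt]]. exists k. split; auto. lra.
Qed.

Lemma Un_cv_nondecreasing_gap (u : nat -> R) L :
  (forall k j, (k <= j)%nat -> u k <= u j) -> (forall k, u k <= L) ->
  (forall e, 0 < e -> exists k, L - u k < e) -> Un_cv u L.
Proof.
  intros Hmono Hub Hgap e He. destruct (Hgap e He) as [N HN]. exists N. intros k Hk.
  pose proof (Hmono N k Hk). pose proof (Hub k). unfold Rdist. rewrite Rabs_left1; lra.
Qed.

(** * Discounted series *)

Section Discounted.
Variable g : R.
Hypothesis Hg : 0 < g < 1.

Lemma series_cv_geom : series_cv (fun n => g ^ n) (/ (1 - g)).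
Proof.
  intros eps He. destruct (GP_infinite g ltac:(rewrite Rabs_right; lra) eps He) as [N HN].
  exists N. intros n Hn. rewrite (sum_eq _ (fun i => 1 * g ^ i)); auto. intros; ring.
Qed.

Lemma discounted_cv_exists (x : nat -> R) C : (forall n, Rabs (x n) <= C) ->
  exists l, series_cv (fun n => g ^ n * x n) l.
Proof.
  intros H.
  assert (HC : 0 <= C) by (eapply Rle_trans; [apply Rabs_pos | apply (H O)]).
  destruct (Rseries_CV_comp (fun n => g ^ n * (x n + C)) (fun n => (2 * C) * g ^ n)) as [l Hl].
  - intros n. pose proof (Rabs_le_inv _ _ (H n)). pose proof (pow_le g n ltac:(lra)).
    split; nra.
  - exists (2 * C * / (1 - g)). apply series_cv_scal_l, series_cv_geom.
  - exists (l - C * / (1 - g)).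
    eapply series_cv_ext; [|apply (series_cv_minus _ _ _ _ Hl (series_cv_scal_l _ _ C series_cv_geom))].
    intros n; simpl; ring.
Qed.

Lemma discounted_cv_bound (x : nat -> R) C l : (forall n, Rabs (x n) <= C) ->
  series_cv (fun n => g ^ n * x n) l -> Rabs l <= C / (1 - g).
Proof.
  intros H Hl. apply Rabs_le. unfold Rdiv. split.
  - replace (- (C * / (1 - g))) with (- C * / (1 - g)) by ring.
    eapply series_cv_le; [| apply (series_cv_scal_l _ _ (-C) series_cv_geom) | apply Hl].
    intros n. pose proof (Rabs_le_inv _ _ (H n)). pose proof (pow_le g n ltac:(lra)). nra.
  - eapply series_cv_le; [| apply Hl | apply (series_cv_scal_l _ _ C series_cv_geom)].
    intros n. pose proof (Rabs_le_inv _ _ (H n)). pose proof (pow_le g n ltac:(lra)). nra.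
Qed.

Lemma discounted_cv_nonneg (x : nat -> R) l : (forall n, 0 <= x n) ->
  series_cv (fun n => g ^ n * x n) l -> 0 <= l.
Proof.
  intros H Hl. eapply series_cv_le; [| apply series_cv_0 | apply Hl].
  intros n. pose proof (pow_le g n ltac:(lra)). specialize (H n). nra.
Qed.

Lemma discounted_cv_shift (x : nat -> R) l : series_cv (fun n => g ^ n * x n) l ->
  exists l', series_cv (fun n => g ^ n * x (S n)) l' /\ l = x O + g * l'.
Proof.
  intros H. apply series_cv_shift in H. simpl in H.
  exists (/ g * (l - 1 * x O)). split.
  - eapply series_cv_ext; [|apply (series_cv_scal_l _ _ (/ g) H)]. intros n; simpl. field. lra.
  - field. lra.
Qed.

End Discounted.

(** * Returns, values and visitation frequencies *)

Section MDPTheory.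
Variable M : MDP.
Hypothesis HM : mdp_wf M.
Local Notation n := (nS M).
Local Notation m := (nA M).
Local Notation g := (mgamma M).

Lemma discount_bounds : 0 < g < 1.
Proof. apply HM. Qed.

Lemma transition_nonneg s a s' : (s < n)%nat -> (a < m)%nat -> (s' < n)%nat -> 0 <= mP M s a s'.
Proof. intros. apply (proj2 (proj2 (proj2 HM)) s a); auto. Qed.

Lemma transition_sum s a : (s < n)%nat -> (a < m)%nat -> fsum n (mP M s a) = 1.
Proof. intros. apply (proj2 (proj2 (proj2 HM)) s a); auto. Qed.

Lemma rho0_pos s : (s < n)%nat -> 0 < mrho0 M s.
Proof. apply HM. Qed.

Lemma rho0_sum : fsum n (mrho0 M) = 1.
Proof. apply HM. Qed.

Definition nonneg_sa (mu : nat -> nat -> R) :=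
  forall s a, (s < n)%nat -> (a < m)%nat -> 0 <= mu s a.

Definition total_mass (mu : nat -> nat -> R) := fsum n (fun s => fsum m (mu s)).

Definition point_sa (s0 a0 : nat) : nat -> nat -> R := fun s a => kron s s0 * kron a a0.

Definition exp_reward (pi : policy) (mu : nat -> nat -> R) (t : nat) :=
  fsum n (fun s => fsum m (fun a => sa_dist M pi mu t s a * mr M s a)).

Definition reward_bound := fsum n (fun s => fsum m (fun a => Rabs (mr M s a))).

Definition state_kernel (pi : policy) (s s' : nat) := fsum m (fun a => pi s a * mP M s a s').

Lemma reward_bound_nonneg : 0 <= reward_bound.
Proof. apply fsum_nonneg; intros; apply fsum_nonneg; intros; apply Rabs_pos. Qed.

Lemma Rabs_reward_le s a : (s < n)%nat -> (a < m)%nat -> Rabs (mr M s a) <= reward_bound.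
Proof.
  intros Hs Ha. eapply Rle_trans;
    [| apply (fsum_ge_term n (fun s => fsum m (fun a => Rabs (mr M s a))) s); auto].
  - apply (fsum_ge_term m (fun a => Rabs (mr M s a))); auto. intros; apply Rabs_pos.
  - intros; apply fsum_nonneg; intros; apply Rabs_pos.
Qed.

Lemma point_sa_nonneg s0 a0 : nonneg_sa (point_sa s0 a0).
Proof. intros s a _ _. apply Rmult_le_pos; apply kron_nonneg. Qed.

Lemma total_mass_point_sa s a : (s < n)%nat -> (a < m)%nat -> total_mass (point_sa s a) = 1.
Proof.
  intros Hs Ha. unfold total_mass, point_sa.
  rewrite <- (fsum_kron2 n m s a (fun _ _ => 1)) by auto.
  apply fsum_ext; intros; apply fsum_ext; intros; ring.
Qed.

Section Policy.
Variable pi : policy.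
Hypothesis Hpi : is_policy M pi.

Lemma policy_nonneg s a : (s < n)%nat -> (a < m)%nat -> 0 <= pi s a.
Proof. intros. apply Hpi; auto. Qed.

Lemma policy_sum s : (s < n)%nat -> fsum m (pi s) = 1.
Proof. intros. apply Hpi; auto. Qed.

Lemma sa_dist_nonneg mu t : nonneg_sa mu -> nonneg_sa (sa_dist M pi mu t).
Proof.
  intros H. induction t as [|t IH]; simpl; auto. intros s a Hs Ha.
  apply Rmult_le_pos; [apply policy_nonneg; auto|].
  apply fsum_nonneg; intros; apply fsum_nonneg; intros.
  apply Rmult_le_pos; [apply IH | apply transition_nonneg]; auto.
Qed.

Lemma total_mass_sa_dist mu t : total_mass (sa_dist M pi mu t) = total_mass mu.
Proof.
  induction t as [|t IH]; simpl; auto. rewrite <- IH. unfold total_mass.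
  transitivity (fsum n (fun s' => fsum n (fun s => fsum m (fun a =>
                  sa_dist M pi mu t s a * mP M s a s')))).
  - apply fsum_ext; intros s' Hs'. rewrite fsum_scal_r, policy_sum; auto. ring.
  - rewrite fsum_swap. apply fsum_ext; intros s Hs. rewrite fsum_swap.
    apply fsum_ext; intros a Ha. rewrite fsum_scal_l, transition_sum; auto. ring.
Qed.

Lemma exp_reward_bound mu t : nonneg_sa mu ->
  Rabs (exp_reward pi mu t) <= reward_bound * total_mass mu.
Proof.
  intros H. unfold exp_reward. eapply Rle_trans; [apply fsum_Rabs_le|].
  rewrite <- (total_mass_sa_dist mu t). unfold total_mass.
  rewrite <- fsum_scal_l. apply fsum_le; intros s Hs.
  eapply Rle_trans; [apply fsum_Rabs_le|].
  rewrite <- fsum_scal_l. apply fsum_le; intros a Ha.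
  pose proof (sa_dist_nonneg mu t H s a Hs Ha). pose proof (Rabs_reward_le s a Hs Ha).
  pose proof (Rabs_pos (mr M s a)).
  rewrite Rabs_mult, (Rabs_right (sa_dist M pi mu t s a)) by lra. nra.
Qed.

Lemma ret_cv mu : nonneg_sa mu ->
  series_cv (fun t => g ^ t * exp_reward pi mu t) (ret M pi mu).
Proof.
  intros H.
  destruct (discounted_cv_exists g discount_bounds (exp_reward pi mu) (reward_bound * total_mass mu))
    as [l Hl]; [intros; apply exp_reward_bound; auto|].
  unfold ret. rewrite (series_sum_unique _ l); auto.
Qed.

Lemma ret_bound mu : nonneg_sa mu ->
  Rabs (ret M pi mu) <= reward_bound * total_mass mu / (1 - g).
Proof.
  intros H. eapply discounted_cv_bound; [apply discount_bounds | | apply ret_cv; auto].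
  intros; apply exp_reward_bound; auto.
Qed.

Lemma sa_dist_succ mu t : sa_dist M pi mu (S t) = sa_dist M pi (sa_dist M pi mu 1) t.
Proof.
  induction t as [|t IH]; [reflexivity|].
  change (sa_dist M pi mu (S (S t))) with (fun s' a' => pi s' a' *
    fsum n (fun s => fsum m (fun a => sa_dist M pi mu (S t) s a * mP M s a s'))).
  rewrite IH. reflexivity.
Qed.

Lemma ret_bellman mu : nonneg_sa mu ->
  ret M pi mu = exp_reward pi mu O + g * ret M pi (sa_dist M pi mu 1).
Proof.
  intros H. destruct (discounted_cv_shift g discount_bounds _ _ (ret_cv mu H)) as [l' [Hl' ->]].
  do 2 f_equal. eapply series_cv_unique; [apply Hl'|].
  eapply series_cv_ext; [|apply ret_cv, sa_dist_nonneg; auto].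
  intros t. unfold exp_reward. rewrite (sa_dist_succ mu t). reflexivity.
Qed.

Lemma sa_dist_linear mu t s a : (s < n)%nat -> (a < m)%nat ->
  sa_dist M pi mu t s a =
  fsum n (fun s0 => fsum m (fun a0 => mu s0 a0 * sa_dist M pi (point_sa s0 a0) t s a)).
Proof.
  revert s a. induction t as [|t IH]; intros s a Hs Ha.
  - simpl. unfold point_sa. rewrite <- (fsum_kron2 n m s a mu) by auto.
    apply fsum_ext; intros s0 _; apply fsum_ext; intros a0 _.
    rewrite (kron_sym s0 s), (kron_sym a0 a). ring.
  - simpl.
    transitivity (fsum n (fun s1 => fsum m (fun a1 => fsum n (fun s0 => fsum m (fun a0 =>
      pi s a * (mu s0 a0 * sa_dist M pi (point_sa s0 a0) t s1 a1 * mP M s1 a1 s)))))).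
    + rewrite fsum2_scal_l. apply fsum_ext; intros s1 Hs1. apply fsum_ext; intros a1 Ha1.
      rewrite IH, fsum2_scal_r, fsum2_scal_l by auto. reflexivity.
    + rewrite fsum_swap4. apply fsum_ext; intros s0 _. apply fsum_ext; intros a0 _.
      rewrite !fsum2_scal_l. apply fsum_ext; intros; apply fsum_ext; intros; ring.
Qed.

Lemma ret_linear mu : nonneg_sa mu ->
  ret M pi mu = fsum n (fun s => fsum m (fun a => mu s a * Qf M pi s a)).
Proof.
  intros H. eapply series_cv_unique; [apply ret_cv; auto|].
  eapply series_cv_ext; [| apply series_cv_fsum; intros s0 _; apply series_cv_fsum;
                           intros a0 _; apply series_cv_scal_l, ret_cv, point_sa_nonneg].
  intros t. simpl. symmetry. unfold exp_reward. rewrite fsum2_scal_l.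
  transitivity (fsum n (fun s => fsum m (fun a => fsum n (fun s0 => fsum m (fun a0 =>
    g ^ t * (mu s0 a0 * sa_dist M pi (point_sa s0 a0) t s a * mr M s a)))))).
  - apply fsum_ext; intros s Hs. apply fsum_ext; intros a Ha.
    rewrite sa_dist_linear, fsum2_scal_r, fsum2_scal_l by auto.
    apply fsum_ext; intros; apply fsum_ext; intros; ring.
  - rewrite fsum_swap4. apply fsum_ext; intros s0 _. apply fsum_ext; intros a0 _.
    rewrite !fsum2_scal_l. unfold point_sa. apply fsum_ext; intros; apply fsum_ext; intros; ring.
Qed.

Lemma Qf_bound s a : (s < n)%nat -> (a < m)%nat -> Rabs (Qf M pi s a) <= reward_bound / (1 - g).
Proof.
  intros Hs Ha. unfold Qf. eapply Rle_trans; [apply (ret_bound (point_sa s a)), point_sa_nonneg|].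
  rewrite total_mass_point_sa by auto. right; field. pose proof discount_bounds; lra.
Qed.

Lemma Vf_eq s : (s < n)%nat -> Vf M pi s = fsum m (fun a => pi s a * Qf M pi s a).
Proof.
  intros Hs. unfold Vf. rewrite ret_linear.
  - rewrite <- (fsum_kron_l n s (fun s0 => fsum m (fun a => pi s a * Qf M pi s0 a))) by auto.
    apply fsum_ext; intros. rewrite <- fsum_scal_l. apply fsum_ext; intros; ring.
  - intros s0 a0 _ Ha0. apply Rmult_le_pos; [apply kron_nonneg | apply policy_nonneg; auto].
Qed.

Lemma Qf_bellman s a : (s < n)%nat -> (a < m)%nat ->
  Qf M pi s a = mr M s a + g * fsum n (fun s' => mP M s a s' * Vf M pi s').
Proof.
  intros Hs Ha. unfold Qf. fold (point_sa s a).
  rewrite ret_bellman by apply point_sa_nonneg. f_equal.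
  - unfold exp_reward. simpl. unfold point_sa. apply fsum_kron2; auto.
  - f_equal. rewrite ret_linear by (apply sa_dist_nonneg, point_sa_nonneg).
    apply fsum_ext; intros s' Hs'. rewrite Vf_eq, <- fsum_scal_l by auto.
    apply fsum_ext; intros a' Ha'. simpl. unfold point_sa.
    rewrite (fsum_kron2 n m s a (fun s0 a0 => mP M s0 a0 s')) by auto. ring.
Qed.

Lemma Adv_mean_zero s : (s < n)%nat -> fsum m (fun a => pi s a * Adv M pi s a) = 0.
Proof.
  intros Hs. unfold Adv.
  rewrite (fsum_ext _ _ (fun a => pi s a * Qf M pi s a - pi s a * Vf M pi s)) by (intros; ring).
  rewrite fsum_minus, fsum_scal_r, policy_sum, <- Vf_eq by auto. ring.
Qed.

Lemma Vf_bound s : (s < n)%nat -> Rabs (Vf M pi s) <= reward_bound / (1 - g).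
Proof.
  intros Hs. rewrite Vf_eq by auto. eapply Rle_trans; [apply fsum_Rabs_le|].
  apply Rle_trans with (fsum m (fun a => pi s a * (reward_bound / (1 - g)))).
  - apply fsum_le; intros a Ha.
    rewrite Rabs_mult, (Rabs_right (pi s a)) by (apply Rle_ge, policy_nonneg; auto).
    apply Rmult_le_compat_l; [apply policy_nonneg | apply Qf_bound]; auto.
  - rewrite fsum_scal_r, policy_sum by auto. lra.
Qed.

Lemma Adv_bound s a : (s < n)%nat -> (a < m)%nat ->
  Rabs (Adv M pi s a) <= 2 * (reward_bound / (1 - g)).
Proof.
  intros Hs Ha. unfold Adv.
  replace (Qf M pi s a - Vf M pi s) with (Qf M pi s a + - Vf M pi s) by ring.
  eapply Rle_trans; [apply Rabs_triang|].
  rewrite Rabs_Ropp. pose proof (Qf_bound s a Hs Ha). pose proof (Vf_bound s Hs). lra.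
Qed.

Lemma init_sa_nonneg : nonneg_sa (init_sa M pi).
Proof.
  intros s a Hs Ha. apply Rmult_le_pos; [left; apply rho0_pos | apply policy_nonneg]; auto.
Qed.

Lemma total_mass_init_sa : total_mass (init_sa M pi) = 1.
Proof.
  unfold total_mass, init_sa. rewrite <- rho0_sum. apply fsum_ext; intros s Hs.
  rewrite fsum_scal_l, policy_sum by auto. ring.
Qed.

Lemma eta_bound : Rabs (eta M pi) <= reward_bound / (1 - g).
Proof.
  unfold eta. eapply Rle_trans; [apply ret_bound, init_sa_nonneg|].
  rewrite total_mass_init_sa. right; field. pose proof discount_bounds; lra.
Qed.

Lemma sa_dist_init t s a : (s < n)%nat ->
  sa_dist M pi (init_sa M pi) t s a = pi s a * state_prob M pi t s.
Proof.
  intros Hs. unfold state_prob. destruct t; simpl.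
  - unfold init_sa. rewrite fsum_scal_l, policy_sum by auto. ring.
  - rewrite fsum_scal_r, policy_sum by auto. ring.
Qed.

Lemma state_prob_succ t s' : (s' < n)%nat ->
  state_prob M pi (S t) s' = fsum n (fun s => state_prob M pi t s * state_kernel pi s s').
Proof.
  intros Hs'. unfold state_prob at 1. simpl. rewrite fsum_scal_r, policy_sum, Rmult_1_l by auto.
  apply fsum_ext; intros s Hs. unfold state_kernel. rewrite <- fsum_scal_l.
  apply fsum_ext; intros a Ha. rewrite sa_dist_init by auto. ring.
Qed.

Lemma state_prob_nonneg t s : (s < n)%nat -> 0 <= state_prob M pi t s.
Proof.
  intros. apply fsum_nonneg; intros. apply sa_dist_nonneg; auto. apply init_sa_nonneg.
Qed.

Lemma state_prob_sum t : fsum n (state_prob M pi t) = 1.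
Proof.
  change (total_mass (sa_dist M pi (init_sa M pi) t) = 1).
  rewrite total_mass_sa_dist. apply total_mass_init_sa.
Qed.

Lemma state_prob_le_1 t s : (s < n)%nat -> state_prob M pi t s <= 1.
Proof.
  intros. rewrite <- (state_prob_sum t).
  apply (fsum_ge_term n (state_prob M pi t)); auto. intros; apply state_prob_nonneg; auto.
Qed.

Lemma rho_vis_cv s : (s < n)%nat ->
  series_cv (fun t => g ^ t * state_prob M pi t s) (rho_vis M pi s).
Proof.
  intros Hs.
  destruct (discounted_cv_exists g discount_bounds (fun t => state_prob M pi t s) 1) as [l Hl].
  - intros t. rewrite Rabs_right; [apply state_prob_le_1 | apply Rle_ge, state_prob_nonneg]; auto.
  - unfold rho_vis. rewrite (series_sum_unique _ l); auto.
Qed.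

Lemma rho_vis_rec s' : (s' < n)%nat ->
  rho_vis M pi s' = mrho0 M s' + g * fsum n (fun s => rho_vis M pi s * state_kernel pi s s').
Proof.
  intros Hs'.
  destruct (discounted_cv_shift g discount_bounds _ _ (rho_vis_cv s' Hs')) as [l' [Hl' ->]].
  f_equal.
  - unfold state_prob; simpl. unfold init_sa. rewrite fsum_scal_l, policy_sum by auto. ring.
  - f_equal. eapply series_cv_unique; [apply Hl'|].
    eapply series_cv_ext; [| apply series_cv_fsum; intros s Hs; apply series_cv_scal_r, rho_vis_cv; auto].
    intros t. simpl. rewrite state_prob_succ, <- fsum_scal_l by auto. apply fsum_ext; intros; ring.
Qed.

Lemma rho_vis_nonneg s : (s < n)%nat -> 0 <= rho_vis M pi s.
Proof.
  intros Hs. eapply discounted_cv_nonneg; [apply discount_bounds | | apply rho_vis_cv; auto].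
  intros; apply state_prob_nonneg; auto.
Qed.

Lemma state_kernel_nonneg s s' : (s < n)%nat -> (s' < n)%nat -> 0 <= state_kernel pi s s'.
Proof.
  intros. apply fsum_nonneg; intros.
  apply Rmult_le_pos; [apply policy_nonneg | apply transition_nonneg]; auto.
Qed.

Lemma state_kernel_sum s : (s < n)%nat -> fsum n (state_kernel pi s) = 1.
Proof.
  intros. unfold state_kernel. rewrite fsum_swap, <- (policy_sum s) by auto.
  apply fsum_ext; intros. rewrite fsum_scal_l, transition_sum by auto. ring.
Qed.

Lemma rho0_le_rho_vis s : (s < n)%nat -> mrho0 M s <= rho_vis M pi s.
Proof.
  intros. rewrite rho_vis_rec by auto. pose proof discount_bounds.
  assert (0 <= fsum n (fun s0 => rho_vis M pi s0 * state_kernel pi s0 s)); [|nra].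
  apply fsum_nonneg; intros.
  apply Rmult_le_pos; [apply rho_vis_nonneg | apply state_kernel_nonneg]; auto.
Qed.

Lemma rho_vis_sum : fsum n (rho_vis M pi) = / (1 - g).
Proof.
  eapply series_cv_unique; [| apply (series_cv_geom g discount_bounds)].
  eapply series_cv_ext; [| apply series_cv_fsum; intros s Hs; apply rho_vis_cv; auto].
  intros t. simpl. rewrite fsum_scal_l, state_prob_sum. ring.
Qed.

Lemma rho_vis_le s : (s < n)%nat -> rho_vis M pi s <= / (1 - g).
Proof.
  intros. rewrite <- rho_vis_sum. apply (fsum_ge_term n (rho_vis M pi)); auto.
  intros; apply rho_vis_nonneg; auto.
Qed.

Lemma eta_occupancy :
  eta M pi = fsum n (fun s => rho_vis M pi s * fsum m (fun a => pi s a * mr M s a)).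
Proof.
  eapply series_cv_unique; [apply ret_cv, init_sa_nonneg|].
  eapply series_cv_ext; [| apply series_cv_fsum; intros s Hs; apply series_cv_scal_r, rho_vis_cv; auto].
  intros t. simpl. unfold exp_reward. rewrite <- fsum_scal_l. apply fsum_ext; intros s Hs.
  rewrite Rmult_assoc, <- fsum_scal_l. f_equal. apply fsum_ext; intros a Ha.
  rewrite sa_dist_init by auto. ring.
Qed.

Lemma eta_initial_values : eta M pi = fsum n (fun s => mrho0 M s * Vf M pi s).
Proof.
  unfold eta. rewrite ret_linear by apply init_sa_nonneg.
  apply fsum_ext; intros s Hs. rewrite Vf_eq, <- fsum_scal_l by auto.
  apply fsum_ext; intros. unfold init_sa; ring.
Qed.

End Policy.

(** * Policy advantage *)

Lemma Adv_mean_expand pi p s : is_policy M pi -> is_policy M p -> (s < n)%nat ->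
  fsum m (fun a => p s a * Adv M pi s a) =
  fsum m (fun a => p s a * mr M s a) + g * fsum n (fun s' => state_kernel p s s' * Vf M pi s')
  - Vf M pi s.
Proof.
  intros Hpi Hp Hs. unfold Adv.
  rewrite (fsum_ext _ _ (fun a => p s a * mr M s a +
     (g * fsum n (fun s' => p s a * mP M s a s' * Vf M pi s') - p s a * Vf M pi s))).
  2: { intros a Ha. rewrite Qf_bellman by auto.
       replace (fsum n (fun s' => p s a * mP M s a s' * Vf M pi s'))
         with (p s a * fsum n (fun s' => mP M s a s' * Vf M pi s')); [ring|].
       rewrite <- fsum_scal_l. apply fsum_ext; intros; ring. }
  rewrite fsum_plus, fsum_minus, fsum_scal_r, (policy_sum p Hp), fsum_scal_l by auto.
  unfold state_kernel. rewrite fsum_swap.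
  rewrite (fsum_ext n _ (fun s' => fsum m (fun a => p s a * mP M s a s') * Vf M pi s')); [ring|].
  intros. rewrite fsum_scal_r. reflexivity.
Qed.

Lemma performance_difference pi p : is_policy M pi -> is_policy M p ->
  eta M p - eta M pi = fsum n (fun s => rho_vis M p s * fsum m (fun a => p s a * Adv M pi s a)).
Proof.
  intros Hpi Hp. pose proof discount_bounds as Hg.
  rewrite (fsum_ext _ _ (fun s => rho_vis M p s * fsum m (fun a => p s a * mr M s a) +
     (g * fsum n (fun s' => rho_vis M p s * state_kernel p s s' * Vf M pi s')
      - rho_vis M p s * Vf M pi s))).
  2: { intros s Hs. rewrite Adv_mean_expand by auto.
       replace (fsum n (fun s' => rho_vis M p s * state_kernel p s s' * Vf M pi s'))
         with (rho_vis M p s * fsum n (fun s' => state_kernel p s s' * Vf M pi s')); [ring|].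
       rewrite <- fsum_scal_l. apply fsum_ext; intros; ring. }
  rewrite fsum_plus, fsum_minus, <- (eta_occupancy p Hp), fsum_scal_l, fsum_swap.
  rewrite (fsum_ext _ _ (fun s' => (rho_vis M p s' - mrho0 M s') / g * Vf M pi s')).
  2: { intros s' Hs'. rewrite fsum_scal_r, (rho_vis_rec p Hp s') by auto. field. lra. }
  rewrite (eta_initial_values pi Hpi).
  assert (E : fsum n (fun s' => (rho_vis M p s' - mrho0 M s') / g * Vf M pi s') =
    / g * (fsum n (fun s' => rho_vis M p s' * Vf M pi s') - fsum n (fun s' => mrho0 M s' * Vf M pi s'))).
  { rewrite <- fsum_minus, <- fsum_scal_l. apply fsum_ext; intros; unfold Rdiv; ring. }
  rewrite E. field. lra.
Qed.

Lemma states_nonempty : (0 < n)%nat.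
Proof. pose proof rho0_sum as H. destruct n; simpl in H; lra || lia. Qed.

Lemma actions_nonempty pi : is_policy M pi -> (0 < m)%nat.
Proof.
  intros Hpi. pose proof (policy_sum pi Hpi 0 states_nonempty) as H.
  destruct m; simpl in H; lra || lia.
Qed.

Definition greedy_action (pi : policy) (s : nat) := argmax (Adv M pi s) m.

Definition greedy (pi : policy) : policy := fun s a => kron a (greedy_action pi s).

Section Greedy.
Variable pi : policy.
Hypothesis Hpi : is_policy M pi.

Lemma greedy_action_spec s : (greedy_action pi s < m)%nat /\
  forall a, (a < m)%nat -> Adv M pi s a <= Adv M pi s (greedy_action pi s).
Proof. apply argmax_spec, (actions_nonempty pi Hpi). Qed.

Lemma greedy_policy : is_policy M (greedy pi).
Proof.
  intros s Hs. split; [intros; apply kron_nonneg|]. unfold greedy.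
  rewrite <- (fsum_kron_l m (greedy_action pi s) (fun _ => 1)) by apply greedy_action_spec.
  apply fsum_ext; intros; ring.
Qed.

Lemma greedy_Adv_mean s :
  fsum m (fun a => greedy pi s a * Adv M pi s a) = Adv M pi s (greedy_action pi s).
Proof. apply fsum_kron_l, greedy_action_spec. Qed.

Lemma Adv_mean_le_greedy p s : is_policy M p -> (s < n)%nat ->
  fsum m (fun a => p s a * Adv M pi s a) <= Adv M pi s (greedy_action pi s).
Proof.
  intros Hp Hs. apply Rle_trans with (fsum m (fun a => p s a * Adv M pi s (greedy_action pi s))).
  - apply fsum_le; intros a Ha.
    apply Rmult_le_compat_l; [apply (policy_nonneg p Hp) | apply greedy_action_spec]; auto.
  - rewrite fsum_scal_r, (policy_sum p Hp) by auto. lra.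
Qed.

Lemma greedy_Adv_nonneg s : (s < n)%nat -> 0 <= Adv M pi s (greedy_action pi s).
Proof. intros Hs. rewrite <- (Adv_mean_zero pi Hpi s Hs). apply Adv_mean_le_greedy; auto. Qed.

Lemma PolAdv_self : PolAdv M pi pi = 0.
Proof.
  unfold PolAdv. rewrite <- (fsum_0 n). apply fsum_ext; intros s Hs.
  rewrite Adv_mean_zero by auto. ring.
Qed.

Lemma PolAdv_le_greedy p : is_policy M p -> PolAdv M pi p <= PolAdv M pi (greedy pi).
Proof.
  intros Hp. apply fsum_le; intros s Hs. apply Rmult_le_compat_l; [apply rho_vis_nonneg; auto|].
  rewrite greedy_Adv_mean. apply Adv_mean_le_greedy; auto.
Qed.

Lemma Astar_greedy : Astar M pi = PolAdv M pi (greedy pi).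
Proof.
  assert (H : (exists pi', is_policy M pi' /\ PolAdv M pi pi' = Astar M pi) /\
              (forall pi', is_policy M pi' -> PolAdv M pi pi' <= Astar M pi)).
  { apply (epsilon_spec (inhabits 0) (fun v =>
      (exists pi', is_policy M pi' /\ PolAdv M pi pi' = v) /\
      (forall pi', is_policy M pi' -> PolAdv M pi pi' <= v))).
    exists (PolAdv M pi (greedy pi)). split; [exists (greedy pi); split; auto; apply greedy_policy|].
    intros; apply PolAdv_le_greedy; auto. }
  destruct H as [[q [Hq <-]] Hmax].
  apply Rle_antisym; [apply PolAdv_le_greedy; auto | apply Hmax, greedy_policy].
Qed.

End Greedy.

Lemma rho0_lower_bound : exists c0, 0 < c0 /\ forall s, (s < n)%nat -> c0 <= mrho0 M s.
Proof. apply finite_pos_lower_bound. intros; apply rho0_pos; auto. Qed.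

(* Visitation frequencies of any two policies are comparable, because
   [rho0 <= rho_vis <= 1/(1-g)]. *)
Lemma rho_vis_le_scaled c0 pi p s : 0 < c0 -> (forall s, (s < n)%nat -> c0 <= mrho0 M s) ->
  is_policy M pi -> is_policy M p -> (s < n)%nat ->
  rho_vis M p s <= / ((1 - g) * c0) * rho_vis M pi s.
Proof.
  intros Hc0 Hc Hpi Hp Hs. pose proof discount_bounds.
  pose proof (rho_vis_le p Hp s Hs). pose proof (rho0_le_rho_vis pi Hpi s Hs). pose proof (Hc s Hs).
  apply Rle_trans with (/ (1 - g)); auto.
  rewrite Rinv_mult, Rmult_assoc, <- (Rmult_1_r (/ (1 - g))) at 1.
  apply Rmult_le_compat_l; [left; apply Rinv_0_lt_compat; lra|].
  apply Rmult_le_reg_l with c0; auto. rewrite <- Rmult_assoc, Rinv_r by lra. lra.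
Qed.

Lemma optimality_gap_bound : exists C, 0 < C /\ forall pi p, is_policy M pi -> is_policy M p ->
  eta M p - eta M pi <= C * Astar M pi.
Proof.
  destruct rho0_lower_bound as [c0 [Hc0 Hc]]. pose proof discount_bounds.
  exists (/ ((1 - g) * c0)). split; [apply Rinv_0_lt_compat; nra|].
  intros pi p Hpi Hp. rewrite (performance_difference pi p Hpi Hp), Astar_greedy by auto.
  unfold PolAdv. rewrite <- fsum_scal_l. apply fsum_le; intros s Hs.
  rewrite (greedy_Adv_mean pi Hpi).
  pose proof (Adv_mean_le_greedy pi Hpi p s Hp Hs). pose proof (greedy_Adv_nonneg pi Hpi s Hs).
  pose proof (rho_vis_nonneg p Hp s Hs). pose proof (rho_vis_le_scaled c0 pi p s Hc0 Hc Hpi Hp Hs).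
  apply Rle_trans with (rho_vis M p s * Adv M pi s (greedy_action pi s)); [|nra].
  apply Rmult_le_compat_l; auto.
Qed.

(** * Mixtures and total variation *)

Definition mix (a : R) (pi q : policy) : policy := fun s b => (1 - a) * pi s b + a * q s b.

Lemma mix_policy a pi q : 0 <= a <= 1 -> is_policy M pi -> is_policy M q ->
  is_policy M (mix a pi q).
Proof.
  intros Ha Hpi Hq s Hs. split.
  - intros b Hb. unfold mix.
    pose proof (policy_nonneg pi Hpi s b Hs Hb). pose proof (policy_nonneg q Hq s b Hs Hb). nra.
  - unfold mix. rewrite fsum_plus, !fsum_scal_l, (policy_sum pi Hpi), (policy_sum q Hq) by auto.
    ring.
Qed.

Lemma PolAdv_mix a pi q : is_policy M pi -> PolAdv M pi (mix a pi q) = a * PolAdv M pi q.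
Proof.
  intros Hpi. unfold PolAdv. rewrite <- fsum_scal_l. apply fsum_ext; intros s Hs. unfold mix.
  rewrite (fsum_ext _ _ (fun b => (1 - a) * (pi s b * Adv M pi s b) + a * (q s b * Adv M pi s b)))
    by (intros; ring).
  rewrite fsum_plus, !fsum_scal_l, (Adv_mean_zero pi Hpi s Hs). ring.
Qed.

Lemma dTV_nonneg (p q : nat -> R) : 0 <= dTV M p q.
Proof. apply Rmult_le_pos; [lra | apply fsum_nonneg; intros; apply Rabs_pos]. Qed.

Lemma dTV_le_1 p q s : is_policy M p -> is_policy M q -> (s < n)%nat -> dTV M (p s) (q s) <= 1.
Proof.
  intros Hp Hq Hs. unfold dTV.
  apply Rle_trans with (/ 2 * fsum m (fun b => p s b + q s b)).
  - apply Rmult_le_compat_l; [lra|]. apply fsum_le; intros b Hb.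
    pose proof (policy_nonneg p Hp s b Hs Hb). pose proof (policy_nonneg q Hq s b Hs Hb).
    unfold Rabs; destruct (Rcase_abs _); lra.
  - rewrite fsum_plus, (policy_sum p Hp), (policy_sum q Hq) by auto. lra.
Qed.

Lemma fsum_Rabs_policy_diff (pi p : policy) s :
  fsum m (fun a => Rabs (p s a - pi s a)) = 2 * dTV M (pi s) (p s).
Proof.
  unfold dTV. rewrite (fsum_ext _ _ (fun a => Rabs (pi s a - p s a))) by (intros; apply Rabs_minus_sym).
  field.
Qed.

Lemma avgTV_self pi : avgTV M pi pi = 0.
Proof.
  unfold avgTV, dTV. rewrite <- (fsum_0 n). apply fsum_ext; intros.
  rewrite (fsum_ext _ _ (fun _ => 0)), fsum_0; [ring|].
  intros. rewrite Rminus_diag, Rabs_R0; auto.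
Qed.

Lemma avgTV_nonneg pi q : is_policy M pi -> 0 <= avgTV M pi q.
Proof.
  intros. apply fsum_nonneg; intros.
  apply Rmult_le_pos; [apply rho_vis_nonneg | apply dTV_nonneg]; auto.
Qed.

Lemma avgTV_le pi q : is_policy M pi -> is_policy M q -> avgTV M pi q <= / (1 - g).
Proof.
  intros Hpi Hq. unfold avgTV. rewrite <- (rho_vis_sum pi Hpi). apply fsum_le; intros s Hs.
  pose proof (dTV_le_1 pi q s Hpi Hq Hs). pose proof (rho_vis_nonneg pi Hpi s Hs). nra.
Qed.

Lemma avgTV_mix a pi q : 0 <= a -> avgTV M pi (mix a pi q) = a * avgTV M pi q.
Proof.
  intros Ha. unfold avgTV. rewrite <- fsum_scal_l. apply fsum_ext; intros s Hs. unfold dTV, mix.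
  rewrite (fsum_ext _ _ (fun b => a * Rabs (pi s b - q s b))), fsum_scal_l; [ring|].
  intros b Hb. replace (pi s b - ((1 - a) * pi s b + a * q s b)) with (a * (pi s b - q s b)) by ring.
  rewrite Rabs_mult, Rabs_right by lra. reflexivity.
Qed.

Lemma dTV_le_avgTV c0 pi p s : 0 < c0 -> (forall s, (s < n)%nat -> c0 <= mrho0 M s) ->
  is_policy M pi -> (s < n)%nat -> dTV M (pi s) (p s) <= avgTV M pi p / c0.
Proof.
  intros Hc0 Hc Hpi Hs. apply Rmult_le_reg_l with c0; auto. unfold Rdiv.
  rewrite (Rmult_comm (avgTV M pi p)), <- Rmult_assoc, Rinv_r, Rmult_1_l by lra.
  apply Rle_trans with (rho_vis M pi s * dTV M (pi s) (p s)).
  - apply Rmult_le_compat_r; [apply dTV_nonneg|].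
    eapply Rle_trans; [apply (Hc s Hs) | apply (rho0_le_rho_vis pi Hpi s Hs)].
  - apply (fsum_ge_term n (fun s => rho_vis M pi s * dTV M (pi s) (p s))); auto.
    intros; apply Rmult_le_pos; [apply rho_vis_nonneg | apply dTV_nonneg]; auto.
Qed.

Lemma rho_vis_diff_rec pi p s' : is_policy M pi -> is_policy M p -> (s' < n)%nat ->
  rho_vis M p s' - rho_vis M pi s' =
  g * (fsum n (fun s => (rho_vis M p s - rho_vis M pi s) * state_kernel p s s') +
       fsum n (fun s => rho_vis M pi s *
                        fsum m (fun a => (p s a - pi s a) * mP M s a s'))).
Proof.
  intros Hpi Hp Hs'. rewrite (rho_vis_rec p Hp s'), (rho_vis_rec pi Hpi s') by auto.
  transitivity (g * fsum n (fun s =>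
    rho_vis M p s * state_kernel p s s' - rho_vis M pi s * state_kernel pi s s')).
  { rewrite fsum_minus. ring. }
  f_equal. rewrite <- fsum_plus. apply fsum_ext; intros s Hs.
  replace (fsum m (fun a => (p s a - pi s a) * mP M s a s'))
    with (state_kernel p s s' - state_kernel pi s s'); [ring|].
  unfold state_kernel. rewrite <- fsum_minus. apply fsum_ext; intros; ring.
Qed.

(* The L1 error [E] satisfies [E <= g E + 2 g avgTV]. *)
Lemma rho_vis_perturbation pi p : is_policy M pi -> is_policy M p ->
  fsum n (fun s => Rabs (rho_vis M p s - rho_vis M pi s)) <= 2 * g * avgTV M pi p / (1 - g).
Proof.
  intros Hpi Hp. pose proof discount_bounds as Hg.
  set (E := fsum n (fun s => Rabs (rho_vis M p s - rho_vis M pi s))).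
  assert (HE : E <= g * E + 2 * g * avgTV M pi p).
  { unfold E at 1.
    apply Rle_trans with (fsum n (fun s' => g *
      (fsum n (fun s => Rabs (rho_vis M p s - rho_vis M pi s) * state_kernel p s s') +
       fsum n (fun s => rho_vis M pi s * fsum m (fun a => Rabs (p s a - pi s a) * mP M s a s'))))).
    - apply fsum_le; intros s' Hs'. rewrite rho_vis_diff_rec by auto.
      rewrite Rabs_mult, (Rabs_right g) by lra. apply Rmult_le_compat_l; [lra|].
      eapply Rle_trans; [apply Rabs_triang | apply Rplus_le_compat;
        (eapply Rle_trans; [apply fsum_Rabs_le | apply fsum_le; intros s Hs; rewrite Rabs_mult])].
      + rewrite (Rabs_right (state_kernel p s s')); [lra|].
        apply Rle_ge, state_kernel_nonneg; auto.
      + rewrite (Rabs_right (rho_vis M pi s)) by (apply Rle_ge, rho_vis_nonneg; auto).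
        apply Rmult_le_compat_l; [apply rho_vis_nonneg; auto|].
        eapply Rle_trans; [apply fsum_Rabs_le | apply fsum_le; intros a Ha].
        rewrite Rabs_mult, (Rabs_right (mP M s a s')); [lra|].
        apply Rle_ge, transition_nonneg; auto.
    - assert (A1 : fsum n (fun s' => fsum n (fun s =>
          Rabs (rho_vis M p s - rho_vis M pi s) * state_kernel p s s')) = E).
      { rewrite fsum_swap. apply fsum_ext; intros s Hs.
        rewrite fsum_scal_l, state_kernel_sum by auto. ring. }
      assert (A2 : fsum n (fun s' => fsum n (fun s => rho_vis M pi s *
          fsum m (fun a => Rabs (p s a - pi s a) * mP M s a s'))) = 2 * avgTV M pi p).
      { rewrite fsum_swap. unfold avgTV. rewrite <- fsum_scal_l. apply fsum_ext; intros s Hs.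
        rewrite fsum_scal_l, fsum_swap.
        rewrite (fsum_ext _ _ (fun a => Rabs (p s a - pi s a))), fsum_Rabs_policy_diff; [ring|].
        intros a Ha. rewrite fsum_scal_l, transition_sum by auto. ring. }
      rewrite fsum_scal_l, fsum_plus, A1, A2. lra. }
  apply Rmult_le_reg_l with (1 - g); [lra|]. unfold Rdiv.
  rewrite (Rmult_comm (2 * g * avgTV M pi p)), <- Rmult_assoc, Rinv_r by lra. lra.
Qed.

Lemma surrogate_error_eq pi p : is_policy M pi -> is_policy M p ->
  eta M p - Lsur M pi p =
  fsum n (fun s => (rho_vis M p s - rho_vis M pi s) * fsum m (fun a => p s a * Adv M pi s a)).
Proof.
  intros Hpi Hp. unfold Lsur.
  replace (eta M p - (eta M pi + PolAdv M pi p)) with ((eta M p - eta M pi) - PolAdv M pi p)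
    by ring.
  rewrite performance_difference by auto. unfold PolAdv. rewrite <- fsum_minus.
  apply fsum_ext; intros; ring.
Qed.

Lemma Adv_mean_bound_dTV pi p s : is_policy M pi -> (s < n)%nat ->
  Rabs (fsum m (fun a => p s a * Adv M pi s a)) <=
  4 * (reward_bound / (1 - g)) * dTV M (pi s) (p s).
Proof.
  intros Hpi Hs.
  rewrite (fsum_ext _ _ (fun a => (p s a - pi s a) * Adv M pi s a + pi s a * Adv M pi s a))
    by (intros; ring).
  rewrite fsum_plus, (Adv_mean_zero pi Hpi s Hs), Rplus_0_r.
  eapply Rle_trans; [apply fsum_Rabs_le|].
  apply Rle_trans with (fsum m (fun a => Rabs (p s a - pi s a) * (2 * (reward_bound / (1 - g))))).
  - apply fsum_le; intros a Ha. rewrite Rabs_mult.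
    apply Rmult_le_compat_l; [apply Rabs_pos | apply Adv_bound; auto].
  - rewrite fsum_scal_r, fsum_Rabs_policy_diff. lra.
Qed.

(* Both factors of the sum in [surrogate_error_eq] are of order [avgTV pi p]. *)
Lemma surrogate_error_bound : exists K, 0 < K /\ forall pi p, is_policy M pi -> is_policy M p ->
  Rabs (eta M p - Lsur M pi p) <= K * (avgTV M pi p * avgTV M pi p).
Proof.
  destruct rho0_lower_bound as [c0 [Hc0 Hc]]. pose proof discount_bounds as Hg.
  set (Am := reward_bound / (1 - g)).
  assert (HAm : 0 <= Am).
  { pose proof reward_bound_nonneg. unfold Am, Rdiv.
    apply Rmult_le_pos; [lra | left; apply Rinv_0_lt_compat; lra]. }
  set (K0 := 2 * g / (1 - g) * (4 * Am / c0)).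
  assert (HK0 : 0 <= K0).
  { unfold K0, Rdiv. apply Rmult_le_pos; apply Rmult_le_pos; try nra;
      left; apply Rinv_0_lt_compat; lra. }
  exists (K0 + 1). split; [lra|]. intros pi p Hpi Hp.
  set (T := avgTV M pi p). assert (HT : 0 <= T) by (apply avgTV_nonneg; auto).
  assert (HG : forall s, (s < n)%nat ->
            Rabs (fsum m (fun a => p s a * Adv M pi s a)) <= 4 * Am * T / c0).
  { intros s Hs. eapply Rle_trans; [apply Adv_mean_bound_dTV; auto|].
    pose proof (dTV_le_avgTV c0 pi p s Hc0 Hc Hpi Hs). pose proof (dTV_nonneg (pi s) (p s)).
    fold Am. unfold T, Rdiv in *. nra. }
  assert (HGb : 0 <= 4 * Am * T / c0).
  { unfold Rdiv. apply Rmult_le_pos; [nra | left; apply Rinv_0_lt_compat; lra]. }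
  pose proof (rho_vis_perturbation pi p Hpi Hp) as Hrho. fold T in Hrho.
  rewrite surrogate_error_eq by auto. eapply Rle_trans; [apply fsum_Rabs_le|].
  apply Rle_trans with (fsum n (fun s => Rabs (rho_vis M p s - rho_vis M pi s)) * (4 * Am * T / c0)).
  - rewrite <- fsum_scal_r. apply fsum_le; intros s Hs. rewrite Rabs_mult.
    apply Rmult_le_compat_l; [apply Rabs_pos | auto].
  - eapply Rle_trans; [apply Rmult_le_compat_r; [exact HGb | exact Hrho]|].
    replace (2 * g * T / (1 - g) * (4 * Am * T / c0)) with (K0 * (T * T))
      by (unfold K0; field; split; lra).
    assert (0 <= T * T) by nra. lra.
Qed.

End MDPTheory.

(** * The trust-region iteration *)

Section TrustRegion.
Variable M : MDP.
Hypothesis HM : mdp_wf M.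
Local Notation g := (mgamma M).
Variables b0 b1 g1 g2 g3 d0 : R.
Hypothesis Hb : 0 < b0 /\ b0 < b1 /\ b1 < 1.
Hypothesis Hgam : 0 < g3 /\ g3 < g2 /\ g2 <= 1 /\ 1 < g1.
Hypothesis Hd0 : 0 < d0.
Variable pi0 : policy.
Hypothesis Hpi0 : is_policy M pi0.
Variables pik pit : nat -> policy.
Variable delta : nat -> R.
Hypothesis Hrun : trust_region_run M b0 b1 g1 g2 g3 d0 pi0 pik pit delta.

Let rk k := ratio M (pik k) (pit k).

(* [L_{pi_k}(pit_k) - L_{pi_k}(pi_k)]. *)
Let pred_gain k := PolAdv M (pik k) (pit k).

Lemma run_step k : subproblem_solution M (pik k) (delta k) (pit k) /\
    (b0 <= rk k -> pik (S k) = pit k) /\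
    (rk k < b0 -> pik (S k) = pik k) /\
    (b1 <= rk k -> delta (S k) = g1 * delta k) /\
    (b0 <= rk k < b1 -> delta (S k) = g2 * delta k) /\
    (rk k < b0 -> delta (S k) = g3 * delta k).
Proof. apply Hrun. Qed.

Lemma run_invariant k : is_policy M (pik k) /\ 0 < delta k.
Proof.
  induction k as [|k [Hpol Hdel]].
  - destruct Hrun as [-> [-> _]]. auto.
  - destruct (run_step k) as [[Hsol _] [S1 [S2 [S3 [S4 S5]]]]].
    destruct (Rlt_le_dec (rk k) b0) as [Hrej|Hacc].
    + rewrite S2, S5 by auto. split; auto. apply Rmult_lt_0_compat; lra.
    + rewrite S1 by auto. split; auto. destruct (Rlt_le_dec (rk k) b1).
      * rewrite S4 by lra. apply Rmult_lt_0_compat; lra.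
      * rewrite S3 by lra. apply Rmult_lt_0_compat; lra.
Qed.

Lemma pik_policy k : is_policy M (pik k). Proof. apply run_invariant. Qed.
Lemma delta_pos k : 0 < delta k. Proof. apply run_invariant. Qed.
Lemma pit_policy k : is_policy M (pit k). Proof. apply (run_step k). Qed.

Lemma pred_gain_max k q : is_policy M q -> avgTV M (pik k) q <= delta k ->
  PolAdv M (pik k) q <= pred_gain k.
Proof.
  intros Hq Ht. destruct (run_step k) as [[_ [_ Hopt]] _].
  pose proof (Hopt q Hq Ht). unfold Lsur in *. unfold pred_gain. lra.
Qed.

Lemma pred_gain_nonneg k : 0 <= pred_gain k.
Proof.
  rewrite <- (PolAdv_self M HM (pik k) (pik_policy k)).
  apply pred_gain_max; [apply pik_policy|]. rewrite avgTV_self. left; apply delta_pos.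
Qed.

Lemma ratio_eq k : rk k = (eta M (pit k) - eta M (pik k)) / pred_gain k.
Proof.
  unfold rk, ratio, Lsur, pred_gain. rewrite (PolAdv_self M HM (pik k) (pik_policy k)).
  f_equal. ring.
Qed.

Lemma accepted_gain k : b0 <= rk k ->
  0 < pred_gain k /\ b0 * pred_gain k <= eta M (pik (S k)) - eta M (pik k).
Proof.
  intros Hacc. destruct (run_step k) as [_ [-> _]]; auto.
  pose proof (pred_gain_nonneg k). rewrite ratio_eq in Hacc.
  destruct (Req_dec (pred_gain k) 0) as [E|NE].
  - rewrite E in Hacc. unfold Rdiv in Hacc. rewrite Rinv_0, Rmult_0_r in Hacc. lra.
  - split; [lra|]. apply Rmult_le_reg_r with (/ pred_gain k); [apply Rinv_0_lt_compat; lra|].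
    rewrite Rmult_assoc, Rinv_r by lra. lra.
Qed.

Lemma eta_run_step k : eta M (pik k) <= eta M (pik (S k)).
Proof.
  destruct (Rlt_le_dec (rk k) b0) as [Hrej|Hacc].
  - destruct (run_step k) as [_ [_ [-> _]]]; auto. lra.
  - destruct (accepted_gain k Hacc). nra.
Qed.

Lemma eta_run_nondecreasing k j : (k <= j)%nat -> eta M (pik k) <= eta M (pik j).
Proof. induction 1; [lra | eapply Rle_trans; [apply IHle | apply eta_run_step]]. Qed.

(* Mixing [pi_k] with its greedy policy in proportion [min 1 (delta_k (1-g))] stays in the
   trust region, since [avgTV <= 1/(1-g)], and has policy advantage that fraction of [A*]. *)
Lemma pred_gain_ge_Astar k : Rmin 1 (delta k * (1 - g)) * Astar M (pik k) <= pred_gain k.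
Proof.
  pose proof (discount_bounds M HM) as Hg. pose proof (pik_policy k) as Hpol.
  pose proof (greedy_policy M HM (pik k) Hpol) as Hgr.
  set (a := Rmin 1 (delta k * (1 - g))).
  assert (Ha : 0 <= a <= 1).
  { split; [apply Rmin_glb; [lra|] | apply Rmin_l]. pose proof (delta_pos k). nra. }
  rewrite (Astar_greedy M HM (pik k) Hpol), <- (PolAdv_mix M HM a (pik k) (greedy M (pik k)) Hpol).
  apply pred_gain_max; [apply mix_policy; auto|].
  rewrite avgTV_mix by lra.
  pose proof (avgTV_le M HM (pik k) (greedy M (pik k)) Hpol Hgr).
  pose proof (avgTV_nonneg M HM (pik k) (greedy M (pik k)) Hpol).
  assert (a <= delta k * (1 - g)) by apply Rmin_r.
  apply Rle_trans with (a * / (1 - g)); [apply Rmult_le_compat_l; lra|].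
  apply Rmult_le_reg_r with (1 - g); [lra|]. rewrite Rmult_assoc, Rinv_l by lra. lra.
Qed.

Section SurrogateError.
Variable K : R.
Hypothesis HK : 0 < K.
Hypothesis surrogate_error : forall pi p, is_policy M pi -> is_policy M p ->
  Rabs (eta M p - Lsur M pi p) <= K * (avgTV M pi p * avgTV M pi p).

Lemma actual_gain_ge k : pred_gain k - K * (delta k * delta k) <= eta M (pit k) - eta M (pik k).
Proof.
  pose proof (surrogate_error _ _ (pik_policy k) (pit_policy k)) as H.
  unfold Lsur in H. fold (pred_gain k) in H. apply Rabs_le_inv in H.
  pose proof (avgTV_nonneg M HM (pik k) (pit k) (pik_policy k)).
  destruct (run_step k) as [[_ [Ht _]] _].
  set (T := avgTV M (pik k) (pit k)) in *.
  assert (T * T <= delta k * delta k) by nra. nra.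
Qed.

Section AstarBoundedBelow.
Variable eps : R.
Hypothesis Heps : 0 < eps.
Variable N : nat.
Hypothesis HN : forall k, (N <= k)%nat -> eps <= Astar M (pik k).

(* Below this radius every step has [r_k >= b1]. *)
Let radius_safe := Rmin (/ (1 - g)) ((1 - b1) * (1 - g) * eps / K).

Lemma radius_safe_pos : 0 < radius_safe.
Proof.
  pose proof (discount_bounds M HM). apply Rmin_pos; [apply Rinv_0_lt_compat; lra|].
  unfold Rdiv. apply Rmult_lt_0_compat; [| apply Rinv_0_lt_compat; auto].
  apply Rmult_lt_0_compat; nra.
Qed.

Lemma small_radius_very_successful k : (N <= k)%nat -> delta k <= radius_safe -> b1 <= rk k.
Proof.
  intros Hk Hd. pose proof (discount_bounds M HM) as Hg. pose proof (delta_pos k) as Hdp.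
  assert (Hw : delta k * (1 - g) <= 1).
  { assert (delta k <= / (1 - g)) by (eapply Rle_trans; [apply Hd | apply Rmin_l]).
    apply Rmult_le_reg_r with (/ (1 - g)); [apply Rinv_0_lt_compat; lra|].
    rewrite Rmult_assoc, Rinv_r by lra. lra. }
  assert (HD : delta k * (1 - g) * eps <= pred_gain k).
  { pose proof (pred_gain_ge_Astar k) as Hp. rewrite Rmin_right in Hp by lra.
    pose proof (HN k Hk). assert (0 <= delta k * (1 - g)) by nra. nra. }
  assert (Hd2 : K * delta k <= (1 - b1) * (1 - g) * eps).
  { assert (delta k <= (1 - b1) * (1 - g) * eps / K)
      by (eapply Rle_trans; [apply Hd | apply Rmin_r]).
    apply Rmult_le_reg_r with (/ K); [apply Rinv_0_lt_compat; auto|].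
    rewrite (Rmult_comm K), Rmult_assoc, Rinv_r, Rmult_1_r by lra. auto. }
  pose proof (actual_gain_ge k) as HA.
  assert (HDp : 0 < pred_gain k).
  { assert (0 < delta k * (1 - g) * eps) by (apply Rmult_lt_0_compat; nra). lra. }
  assert (Hnum : b1 * pred_gain k <= eta M (pit k) - eta M (pik k)).
  { assert (K * (delta k * delta k) <= (1 - b1) * pred_gain k); [|lra].
    rewrite <- Rmult_assoc.
    apply Rle_trans with ((1 - b1) * (1 - g) * eps * delta k); [apply Rmult_le_compat_r; lra|].
    nra. }
  rewrite ratio_eq. apply Rmult_le_reg_r with (pred_gain k); auto.
  unfold Rdiv. rewrite Rmult_assoc, Rinv_l by lra. lra.
Qed.

Let radius_floor := Rmin (delta N) (g3 * radius_safe).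

Lemma radius_floor_pos : 0 < radius_floor.
Proof.
  apply Rmin_pos; [apply delta_pos|]. pose proof radius_safe_pos. apply Rmult_lt_0_compat; lra.
Qed.

Lemma delta_ge_radius_floor k : (N <= k)%nat -> radius_floor <= delta k.
Proof.
  intros Hk. replace k with (N + (k - N))%nat by lia. induction (k - N)%nat as [|j IH].
  { rewrite Nat.add_0_r. apply Rmin_l. }
  replace (N + S j)%nat with (S (N + j)) by lia. set (k' := (N + j)%nat) in *.
  pose proof (delta_pos k'). destruct (run_step k') as [_ [_ [_ [S3 [S4 S5]]]]].
  pose proof radius_safe_pos. assert (radius_floor <= g3 * radius_safe) by apply Rmin_r.
  destruct (Rle_lt_dec (delta k') radius_safe).
  - rewrite S3 by (apply small_radius_very_successful; auto; unfold k'; lia). nra.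
  - destruct (Rlt_le_dec (rk k') b0); [rewrite S5 by auto; nra|].
    destruct (Rlt_le_dec (rk k') b1); [rewrite S4 by lra | rewrite S3 by lra]; nra.
Qed.

Let gain_floor := b0 * (Rmin 1 (radius_floor * (1 - g)) * eps).

Lemma gain_floor_pos : 0 < gain_floor.
Proof.
  pose proof radius_floor_pos. pose proof (discount_bounds M HM).
  apply Rmult_lt_0_compat; [lra|]. apply Rmult_lt_0_compat; auto. apply Rmin_pos; nra.
Qed.

Lemma accepted_gain_ge_floor k : (N <= k)%nat -> b0 <= rk k ->
  eta M (pik k) + gain_floor <= eta M (pik (S k)).
Proof.
  intros Hk Hacc. destruct (accepted_gain k Hacc) as [HD Hgain].
  pose proof (pred_gain_ge_Astar k). pose proof (HN k Hk).
  pose proof (delta_ge_radius_floor k Hk). pose proof (discount_bounds M HM).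
  pose proof radius_floor_pos.
  assert (Rmin 1 (radius_floor * (1 - g)) <= Rmin 1 (delta k * (1 - g))).
  { apply Rmin_glb; [apply Rmin_l | eapply Rle_trans; [apply Rmin_r | nra]]. }
  assert (0 <= Rmin 1 (radius_floor * (1 - g))) by (apply Rmin_glb; nra).
  assert (Rmin 1 (radius_floor * (1 - g)) * eps <= pred_gain k) by nra.
  unfold gain_floor. nra.
Qed.

(* Rejections shrink the radius geometrically until it is safe. *)
Lemma eventually_accepted k : (N <= k)%nat -> exists j, (k <= j)%nat /\ b0 <= rk j.
Proof.
  intros Hk. apply NNPP. intros Hno.
  assert (Hrej : forall j, (k <= j)%nat -> rk j < b0).
  { intros j Hj. destruct (Rlt_le_dec (rk j) b0); auto. exfalso; apply Hno; exists j; auto. }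
  assert (Hpow : forall i, delta (k + i)%nat = g3 ^ i * delta k).
  { induction i as [|i IH]; [rewrite Nat.add_0_r; simpl; ring|].
    replace (k + S i)%nat with (S (k + i)) by lia.
    destruct (run_step (k + i)%nat) as [_ [_ [_ [_ [_ ->]]]]]; [|apply Hrej; lia].
    rewrite IH. simpl. ring. }
  pose proof (delta_pos k). pose proof radius_safe_pos.
  destruct (pow_lt_1_zero g3 ltac:(rewrite Rabs_right; lra) (radius_safe / delta k)) as [i Hi].
  { unfold Rdiv. apply Rmult_lt_0_compat; auto. apply Rinv_0_lt_compat; auto. }
  specialize (Hi i (Nat.le_refl i)). rewrite Rabs_right in Hi by (apply Rle_ge, pow_le; lra).
  assert (delta (k + i)%nat <= radius_safe).
  { rewrite Hpow. apply Rmult_le_reg_r with (/ delta k); [apply Rinv_0_lt_compat; auto|].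
    rewrite Rmult_assoc, Rinv_r by lra. unfold Rdiv in Hi. lra. }
  assert (b1 <= rk (k + i)%nat) by (apply small_radius_very_successful; auto; lia).
  specialize (Hrej (k + i)%nat ltac:(lia)). lra.
Qed.

Lemma eta_run_unbounded i : exists k, (N <= k)%nat /\
  eta M (pik N) + INR i * gain_floor <= eta M (pik k).
Proof.
  induction i as [|i [k [Hk Hi]]]; [exists N; split; auto; simpl; lra|].
  destruct (eventually_accepted k Hk) as [j [Hj Hacc]].
  exists (S j). split; [lia|].
  pose proof (accepted_gain_ge_floor j ltac:(lia) Hacc). pose proof (eta_run_nondecreasing k j Hj).
  rewrite S_INR. lra.
Qed.

Lemma Astar_bounded_below_absurd : False.
Proof.
  pose proof gain_floor_pos. pose proof (discount_bounds M HM).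
  destruct (INR_unbounded (2 * (reward_bound M / (1 - g)) / gain_floor)) as [i Hi].
  destruct (eta_run_unbounded i) as [k [Hk Hgrow]].
  pose proof (Rabs_le_inv _ _ (eta_bound M HM (pik k) (pik_policy k))).
  pose proof (Rabs_le_inv _ _ (eta_bound M HM (pik N) (pik_policy N))).
  assert (2 * (reward_bound M / (1 - g)) < INR i * gain_floor); [|lra].
  apply Rmult_lt_reg_r with (/ gain_floor); [apply Rinv_0_lt_compat; auto|].
  replace (INR i * gain_floor * / gain_floor) with (INR i) by (field; lra).
  unfold Rdiv in Hi. lra.
Qed.

End AstarBoundedBelow.

Lemma Astar_frequently_small_of_surrogate eps : 0 < eps ->
  forall N, exists k, (N <= k)%nat /\ Astar M (pik k) < eps.
Proof.
  intros Heps N. apply NNPP. intros Hno. apply (Astar_bounded_below_absurd eps Heps N).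
  intros k Hk. destruct (Rlt_le_dec (Astar M (pik k)) eps); auto.
  exfalso. apply Hno. exists k; auto.
Qed.

End SurrogateError.

Lemma Astar_frequently_small eps : 0 < eps ->
  forall N, exists k, (N <= k)%nat /\ Astar M (pik k) < eps.
Proof.
  destruct (surrogate_error_bound M HM) as [K [HK HKbound]].
  exact (Astar_frequently_small_of_surrogate K HK HKbound eps).
Qed.

Lemma eta_run_cv_optimal pistar : optimal_policy M pistar ->
  Un_cv (fun k => eta M (pik k)) (eta M pistar).
Proof.
  intros [Hps Hopt]. destruct (optimality_gap_bound M HM) as [C [HC Hgap]].
  apply Un_cv_nondecreasing_gap; [apply eta_run_nondecreasing | intros; apply Hopt, pik_policy|].
  intros e He. destruct (Astar_frequently_small (e / C) ltac:(apply Rdiv_lt_0_compat; auto) O)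
    as [k [_ Hk]].
  exists k. pose proof (Hgap (pik k) pistar (pik_policy k) Hps).
  apply Rmult_lt_compat_l with (r := C) in Hk; auto.
  replace (C * (e / C)) with e in Hk by (field; lra). lra.
Qed.

End TrustRegion.

Theorem mainTheorem4 (M : MDP) (HM : mdp_wf M)
  (b0 b1 g1 g2 g3 d0 : R)
  (Hb : 0 < b0 /\ b0 < b1 /\ b1 < 1)
  (Hg : 0 < g3 /\ g3 < g2 /\ g2 <= 1 /\ 1 < g1)
  (Hd0 : 0 < d0)
  (pi0 : policy) (Hpi0 : is_policy M pi0)
  (pik pit : nat -> policy) (delta : nat -> R)
  (Hrun : trust_region_run M b0 b1 g1 g2 g3 d0 pi0 pik pit delta)
  (Hpos : forall k, 0 < Astar M (pik k)) :
  liminf_is (fun k => Astar M (pik k)) 0 /\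
  (forall pistar, optimal_policy M pistar ->
     Un_cv (fun k => eta M (pik k)) (eta M pistar)).
Proof.
  (* [Hpos] is only needed for [0 <= A*]: a vanishing denominator in [ratio] yields
     [r_k = 0 < b0], i.e. a rejected step, which the argument handles anyway. *)
  split.
  - apply liminf_is_0_of_frequently_small; [intros k; apply Rlt_le, Hpos|].
    exact (Astar_frequently_small M HM b0 b1 g1 g2 g3 d0 Hb Hg Hd0 pi0 Hpi0 pik pit delta Hrun).
  - exact (eta_run_cv_optimal M HM b0 b1 g1 g2 g3 d0 Hb Hg Hd0 pi0 Hpi0 pik pit delta Hrun).
Qed.
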